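(* Let $\mathcal{H}$ be a $d$-dimensional Hilbert space with orthonormal basis $\{|1\rangle,\dots,|d\rangle\}$ and let $0\le n\le d$. Define $A_n:\mathcal{H}^{\otimes n}\to\mathcal{H}^{\otimes d-n}$ by $$A_n=\frac{1}{\sqrt{(d-n)!\,n!}}\sum_{\sigma\in S_d}\operatorname{sgn}(\sigma)\,|\sigma_{n+1},\dots,\sigma_d\rangle\langle\sigma_1,\dots,\sigma_n|,$$ where $S_d$ is the symmetric group on $\{1,\dots,d\}$. Let $\mathcal{E}:\mathcal{B}(\mathcal{H}^{\otimes n})\to\mathcal{B}(\mathcal{H}^{\otimes d-n})$ be a completely positive trace-preserving map having $A_n$ as one of its Kraus operators, and $\mathcal{D}:\mathcal{B}(\mathcal{H}^{\otimes d-n})\to\mathcal{B}(\mathcal{H}^{\otimes n})$ a completely positive trace-preserving map having $A_n^\dagger$ as one of its Kraus operators. Then for every unitary $U$ on $\mathcal{H}$ and every density operator $\rho$ supported on the antisymmetric subspace of $\mathcal{H}^{\otimes n}$, $$\mathcal{D}\big(U^{\otimes d-n}\,\mathcal{E}(\rho)\,U^{\dagger\otimes d-n}\big)=U^{*\otimes n}\rho\,(U^{*\dagger})^{\otimes n},$$ where $U^*$ is the entrywise complex conjugate of $U$ in the basis $\{|i\rangle\}$.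
   Context: The antisymmetric subspace of $\mathcal{H}^{\otimes m}$ is the subspace of vectors $v$ with $P_\pi v=\operatorname{sgn}(\pi)v$ for every permutation $P_\pi$ of the tensor factors. *)

From HB Require Import structures.
From mathcomp Require Import all_boot all_order all_algebra all_fingroup all_field.
Set Implicit Arguments. Unset Strict Implicit. Unset Printing Implicit Defensive.
Import Order.TTheory GRing.Theory Num.Theory.
Local Open Scope ring_scope.

(* Basis of H^{(x) k}, H = C^d with basis |1>,...,|d> (here indexed by 'I_d):
   tuples i : 'I_k -> 'I_d, i.e. |i_1,...,i_k>. *)
Notation tens d k := {ffun 'I_k -> 'I_d}.
(* dim H^{(x) k} ; operators are matrices indexed through enum_val. *)
Definition dimT (d k : nat) : nat := #|tens d k|.
Definition bvec (d k : nat) (i : 'I_(dimT d k)) : tens d k := enum_val i.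

Definition mxadj (p q : nat) (A : 'M[algC]_(p, q)) : 'M[algC]_(q, p) :=
  (map_mx Num.conj A)^T.

Definition tensU (d k : nat) (U : 'M[algC]_d) : 'M[algC]_(dimT d k) :=
  \matrix_(i, j) \prod_(l < k) U (bvec i l) (bvec j l).

Definition sgnC (n : nat) (s : 'S_n) : algC := (-1) ^+ s.

(* A_n = 1/sqrt((d-n)! n!) sum_s sgn(s) |s_{n+1},...,s_d><s_1,...,s_n| *)
Definition Aop (d n : nat) (hnd : (n <= d)%N) :
  'M[algC]_(dimT d (d - n), dimT d n) :=
  \matrix_(i, j) ((sqrtC (((d - n)`!)%:R * (n`!)%:R))^-1 *
    \sum_(s : 'S_d) sgnC s *
      ((bvec i == [ffun l => s (cast_ord (subnKC hnd) (rshift n l))]) &&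
       (bvec j == [ffun l => s (cast_ord (subnKC hnd) (lshift (d - n) l))]))%:R).

Definition kraus_rep (p q : nat) (E : 'M[algC]_p -> 'M[algC]_q) (m : nat)
  (K : 'I_m -> 'M[algC]_(q, p)) : Prop :=
  \sum_(k < m) (mxadj (K k) *m K k) = 1%:M /\
  forall X : 'M[algC]_p, E X = \sum_(k < m) (K k *m X *m mxadj (K k)).

Definition cptp_with_kraus (p q : nat) (E : 'M[algC]_p -> 'M[algC]_q)
  (A : 'M[algC]_(q, p)) : Prop :=
  exists m (K : 'I_m -> 'M[algC]_(q, p)), kraus_rep E K /\ exists k, K k = A.

Definition permT (d k : nat) (s : 'S_k) : 'M[algC]_(dimT d k) :=
  \matrix_(i, j) (bvec i == [ffun l => bvec j (s l)])%:R.

Definition unitary (d : nat) (U : 'M[algC]_d) : Prop := U *m mxadj U = 1%:M.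

Definition density (p : nat) (rho : 'M[algC]_p) : Prop :=
  mxadj rho = rho /\
  (forall v : 'cV[algC]_p, 0 <= (mxadj v *m rho *m v) 0 0) /\ \tr rho = 1.

(* rho supported on the antisymmetric subspace: P_pi rho = sgn(pi) rho *)
Definition antisym_supported (d k : nat) (rho : 'M[algC]_(dimT d k)) : Prop :=
  forall s : 'S_k, permT d s *m rho = sgnC s *: rho.

(* The (|g>, |f>) entry of A_n is, up to the factor 1/sqrt((d-n)! n!), the
   Levi-Civita symbol of the word f g : {1..d} -> {1..d}.  The Leibniz formula
   then gives U^{(x)(d-n)} A_n (U^T)^{(x)n} = det U A_n, and counting the (d-n)!
   permutations that extend an injective f shows that A_n^† A_n is the
   antisymmetrizer of H^{(x)n}; so A_n A_n^† A_n = A_n, and A_n^† A_n fixes every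
   hermitian operator supported on the antisymmetric subspace.  A Kraus operator
   B with B B^† B = B forces all other Kraus operators to vanish on the range of
   B^†; hence E(rho) = A_n rho A_n^† and D(A_n Y A_n^†) = A_n^† A_n Y A_n^† A_n = Y.
   Moving U^{(x)(d-n)} through A_n turns it into U^{*(x)n}, up to the phase
   |det U|^2 = 1. *)

From mathcomp Require Import all_boot all_order all_algebra all_fingroup all_field.
Set Implicit Arguments. Unset Strict Implicit. Unset Printing Implicit Defensive.
Import GRing.Theory Num.Theory.
Local Open Scope ring_scope.

Lemma mxadjE p q (A : 'M[algC]_(p, q)) i j : mxadj A i j = (A j i)^*.
Proof. by rewrite !mxE. Qed.

Lemma mxadjK p q (A : 'M[algC]_(p, q)) : mxadj (mxadj A) = A.
Proof. by apply/matrixP => i j; rewrite !mxadjE conjCK. Qed.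

Lemma mxadjM p q r (A : 'M[algC]_(p, q)) (B : 'M[algC]_(q, r)) :
  mxadj (A *m B) = mxadj B *m mxadj A.
Proof. by rewrite /mxadj map_mxM trmx_mul. Qed.

Lemma mxadjZ p q a (A : 'M[algC]_(p, q)) : mxadj (a *: A) = a^* *: mxadj A.
Proof. by apply/matrixP => i j; rewrite !mxE rmorphM. Qed.

Lemma mxadj_partial_isometry p q (B : 'M[algC]_(q, p)) :
  B *m mxadj B *m B = B -> mxadj B *m B *m mxadj B = mxadj B.
Proof. by move/(congr1 (@mxadj _ _)); rewrite !mxadjM mxadjK mulmxA. Qed.

Lemma herm_mulmx_fixr p (X P : 'M[algC]_p) :
  mxadj X = X -> mxadj P = P -> P *m X = X -> X *m P = X.
Proof. by move=> Xh Ph /(congr1 (@mxadj _ _)); rewrite mxadjM Xh Ph. Qed.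

Lemma det_unitary d (U : 'M[algC]_d) : unitary U -> \det U * (\det U)^* = 1.
Proof.
by move=> U_unitary; rewrite -det_map_mx -(det_tr (map_mx _ U)) -det_mulmx U_unitary det1.
Qed.

Lemma mxtrace_adj_mul p q (A : 'M[algC]_(p, q)) :
  \tr (mxadj A *m A) = \sum_i \sum_j `|A j i| ^+ 2.
Proof.
by apply: eq_bigr => i _; rewrite mxE; apply: eq_bigr => j _; rewrite mxadjE normCK mulrC.
Qed.

Lemma mxtrace_adj_mul_ge0 p q (A : 'M[algC]_(p, q)) : 0 <= \tr (mxadj A *m A).
Proof.
by rewrite mxtrace_adj_mul; do 2![apply: sumr_ge0 => ? _]; rewrite exprn_ge0.
Qed.

Lemma mxtrace_adj_mul_eq0 p q (A : 'M[algC]_(p, q)) : \tr (mxadj A *m A) = 0 -> A = 0.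
Proof.
have sq_ge0 i j : 0 <= `|A j i| ^+ 2 by rewrite exprn_ge0.
have col_ge0 i : 0 <= \sum_j `|A j i| ^+ 2 by apply: sumr_ge0 => j _.
rewrite mxtrace_adj_mul => tr0; apply/matrixP => j i; rewrite mxE.
have col0 := psumr_eq0P (P := predT) (fun i _ => col_ge0 i) tr0 (i := i) isT.
have /eqP := psumr_eq0P (P := predT) (fun j _ => sq_ge0 i j) col0 (i := j) isT.
by rewrite expf_eq0 normr_eq0 => /andP[_ /eqP].
Qed.

Lemma sum_adj_mul_eq0 (I : finType) p q (P : pred I) (A : I -> 'M[algC]_(p, q)) :
  \sum_(k | P k) mxadj (A k) *m A k = 0 -> forall k, P k -> A k = 0.
Proof.
move=> /(congr1 mxtrace); rewrite raddf_sum mxtrace0 => /psumr_eq0P sum0 k Pk.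
by apply: mxtrace_adj_mul_eq0; apply: sum0 => // k' _; apply: mxtrace_adj_mul_ge0.
Qed.

(* Every other Kraus operator [K] satisfies [K B^† = 0]: compress the
   completeness relation by [B] and use positivity of the trace. *)
Lemma kraus_partial_isometry p q (F : 'M[algC]_p -> 'M[algC]_q) (B : 'M[algC]_(q, p)) :
  cptp_with_kraus F B -> B *m mxadj B *m B = B ->
  forall X, mxadj B *m B *m X = X -> X *m (mxadj B *m B) = X ->
  F X = B *m X *m mxadj B.
Proof.
move=> [mK [K [[sumK FK] [k0 Kk0]]]] BBB X BBX XBB.
have KB0 k : k != k0 -> K k *m mxadj B = 0.
  apply: (sum_adj_mul_eq0 (P := fun k => k != k0) (A := fun k => K k *m mxadj B)).
  have := congr1 (fun M => B *m M *m mxadj B) sumK.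
  rewrite /= mulmx1 mulmx_sumr mulmx_suml (bigD1 k0) //= Kk0 !mulmxA BBB.
  move/(congr1 (fun M => M - B *m mxadj B)); rewrite /= addrAC subrr add0r.
  by apply: etrans; apply: eq_bigr => k' _; rewrite mxadjM mxadjK !mulmxA.
rewrite FK (bigD1 k0) //= Kk0 big1 ?addr0 // => k /KB0 KB0k.
by rewrite -BBX !mulmxA KB0k !mul0mx.
Qed.

Lemma kraus_adj_partial_isometry p q (F : 'M[algC]_q -> 'M[algC]_p)
    (B : 'M[algC]_(q, p)) (Y : 'M[algC]_p) :
  cptp_with_kraus F (mxadj B) -> B *m mxadj B *m B = B ->
  F (B *m Y *m mxadj B) = mxadj B *m B *m Y *m mxadj B *m B.
Proof.
move=> F_kraus BBB; have BhB := mxadj_partial_isometry BBB.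
rewrite (kraus_partial_isometry F_kraus); rewrite mxadjK ?BhB //.
- by rewrite !mulmxA.
- by rewrite !mulmxA BBB.
- by rewrite -!mulmxA (mulmxA (mxadj B)) BhB.
Qed.

Lemma sumr_pred1 (T : finType) (x : T) (F : T -> algC) :
  \sum_y (y == x)%:R * F y = F x.
Proof.
by rewrite (bigD1 x) //= eqxx mul1r big1 ?addr0 // => y /negbTE->; rewrite mul0r.
Qed.

Lemma prodr_natb (T : finType) (b : pred T) :
  \prod_x (b x)%:R = [forall x, b x]%:R :> algC.
Proof.
have [/forallP bT|/forallPn[x /negbTE bx]] := boolP [forall x, b x].
  by rewrite big1 // => x _; rewrite bT.
by rewrite (bigD1 x) //= bx mul0r.
Qed.

Lemma sgnCM k (s t : 'S_k) : sgnC (s * t)%g = sgnC s * sgnC t.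
Proof. by rewrite /sgnC odd_permM signr_addb. Qed.

Lemma sgnC_sqr k (s : 'S_k) : sgnC s * sgnC s = 1.
Proof. by rewrite -sgnCM /sgnC odd_permM addbb. Qed.

Lemma fact_neq0 k : k`!%:R != 0 :> algC.
Proof. by rewrite pnatr_eq0 -lt0n fact_gt0. Qed.

Lemma eq_comp_perm_sym (T : finType) k (f g : {ffun 'I_k -> T}) (t : 'S_k) :
  (f == [ffun l => g (t l)]) = (g == [ffun l => f ((t^-1)%g l)]).
Proof.
apply/eqP/eqP => /ffunP E; apply/ffunP => l; rewrite ffunE.
  by rewrite E ffunE permKV.
by rewrite E ffunE permK.
Qed.

Lemma sum_comp_perm_sym (T : finType) k (f g : {ffun 'I_k -> T}) :
  \sum_(t : 'S_k) sgnC t * (f == [ffun l => g (t l)])%:R =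
  \sum_(t : 'S_k) sgnC t * (g == [ffun l => f (t l)])%:R.
Proof.
rewrite (reindex_inj invg_inj); apply: eq_bigr => t _ /=.
by rewrite /sgnC odd_permV eq_comp_perm_sym invgK.
Qed.

Lemma sum_comp_perm_noninj (T : finType) k (f g : {ffun 'I_k -> T}) :
  ~~ injectiveb f -> \sum_(t : 'S_k) sgnC t * (f == [ffun l => g (t l)])%:R = 0.
Proof.
case/injectivePn => a [b ab fab].
have f_tperm l : f (tperm a b l) = f l by case: tpermP => // ->.
set S := (X in X = 0).
have SN : S = - S.
  rewrite {1}/S (reindex_inj (mulgI (tperm a b))) -sumrN; apply: eq_bigr => t _.
  rewrite sgnCM /sgnC odd_tperm ab expr1 mulN1r mulNr; congr (- (_ * (_ : bool)%:R)).
  apply/eqP/eqP => /ffunP E; apply/ffunP => l; rewrite ffunE.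
    by rewrite -f_tperm E ffunE permM tpermK.
  by rewrite permM -f_tperm E ffunE.
have /eqP : S *+ 2 = 0 by rewrite mulr2n {1}SN addNr.
by rewrite mulrn_eq0 => /eqP.
Qed.

Section LeviCivita.
Variable T : finType.
Implicit Types (h : {ffun T -> T}) (p s : {perm T}).

Definition levi h : algC := \sum_(s : {perm T}) (-1) ^+ s * (h == [ffun x => s x])%:R.

Lemma levi_comp_perm h p : levi [ffun x => h (p x)] = (-1) ^+ p * levi h.
Proof.
rewrite /levi (reindex_inj (mulgI p)) mulr_sumr; apply: eq_bigr => s _ /=.
rewrite odd_permM signr_addb -mulrA; congr (_ * (_ * (_ : bool)%:R)).
apply/eqP/eqP => [/ffunP E|->]; apply/ffunP => x; rewrite !ffunE ?permM //.
by move: (E (p^-1 x)%g); rewrite !ffunE permM permKV.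
Qed.

Lemma levi_perm_comp h p : levi [ffun x => p (h x)] = (-1) ^+ p * levi h.
Proof.
rewrite /levi (reindex_inj (mulIg p)) mulr_sumr; apply: eq_bigr => s _ /=.
rewrite odd_permM signr_addb mulrCA -mulrA; congr (_ * (_ * (_ : bool)%:R)).
apply/eqP/eqP => [/ffunP E|->]; apply/ffunP => x; rewrite !ffunE ?permM //.
by move: (E x); rewrite !ffunE permM => /perm_inj.
Qed.

Lemma levi_conj h : (levi h)^* = levi h.
Proof.
by rewrite rmorph_sum; apply: eq_bigr => s _; rewrite rmorphM rmorph_sign rmorph_nat.
Qed.

End LeviCivita.

Lemma det_rowsub_levi d (h : {ffun 'I_d -> 'I_d}) (M : 'M[algC]_d) :
  \det (rowsub h M) = levi h * \det M.
Proof.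
rewrite rowsubE det_mulmx; congr (_ * _); apply: eq_bigr => s _; congr (_ * _).
under eq_bigr do rewrite !mxE.
rewrite prodr_natb; congr (_ : bool)%:R.
by apply/forallP/eqP => [hs|-> x]; [apply/ffunP => x; rewrite ffunE; apply/eqP|rewrite ffunE].
Qed.

Lemma sum_levi_prod d (M : 'M[algC]_d) :
  \sum_(h : {ffun 'I_d -> 'I_d}) levi h * \prod_x M x (h x) = \det M.
Proof.
under eq_bigr do rewrite /levi mulr_suml.
rewrite exchange_big; apply: eq_bigr => s _ /=.
rewrite (eq_bigr (fun h => (h == [ffun x => s x])%:R * ((-1) ^+ s * \prod_x M x (h x)))).
  by rewrite sumr_pred1; under eq_bigr do rewrite ffunE.
by move=> h _; rewrite mulrAC mulrC.
Qed.

Section Blocks.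
Variables (T : finType) (n m : nat).
Variables (idx : 'I_n + 'I_m -> T) (unidx : T -> 'I_n + 'I_m).
Hypotheses (idxK : cancel idx unidx) (unidxK : cancel unidx idx).

Definition idxL (l : 'I_n) : T := idx (inl l).
Definition idxR (r : 'I_m) : T := idx (inr r).

Lemma idxL_inj : injective idxL.
Proof. by move=> a b /(can_inj idxK) []. Qed.

Lemma idxR_inj : injective idxR.
Proof. by move=> a b /(can_inj idxK) []. Qed.

Lemma idxLR_neq l r : idxL l != idxR r.
Proof. by apply/eqP => /(can_inj idxK). Qed.

Lemma eq_on_blocks (U : Type) (h h' : T -> U) :
  (forall l, h (idxL l) = h' (idxL l)) -> (forall r, h (idxR r) = h' (idxR r)) ->
  h =1 h'.
Proof. by move=> hL hR x; rewrite -(unidxK x); case: (unidx x). Qed.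

Lemma card_blocks : #|T| = (n + m)%N.
Proof. by rewrite -(bij_eq_card (f := idx) (Bijective idxK unidxK)) card_sum !card_ord. Qed.

Lemma prod_blocks (F : T -> algC) :
  \prod_x F x = \prod_l F (idxL l) * \prod_r F (idxR r).
Proof.
by rewrite (reindex idx) /=; [rewrite big_sumType | exists unidx].
Qed.

Definition join (f : 'I_n -> T) (g : 'I_m -> T) : {ffun T -> T} :=
  [ffun x => match unidx x with inl l => f l | inr r => g r end].

Lemma joinL f g l : join f g (idxL l) = f l.
Proof. by rewrite ffunE /idxL idxK. Qed.

Lemma joinR f g r : join f g (idxR r) = g r.
Proof. by rewrite ffunE /idxR idxK. Qed.

Lemma join_split (h : {ffun T -> T}) :
  join [ffun l => h (idxL l)] [ffun r => h (idxR r)] = h.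
Proof. by apply/ffunP; apply: eq_on_blocks => i; rewrite ?joinL ?joinR ffunE. Qed.

Lemma join_inj f g : injective f -> injective g -> (forall l r, f l != g r) ->
  injective (join f g).
Proof.
move=> f_inj g_inj fg x y; rewrite -(unidxK x) -(unidxK y).
case: (unidx x) => [l|r]; case: (unidx y) => [l'|r'];
  rewrite -/(idxL _) -/(idxR _) ?joinL ?joinR.
- by move/f_inj->.
- by move/eqP; rewrite (negbTE (fg _ _)).
- by move/esym/eqP; rewrite (negbTE (fg _ _)).
- by move/g_inj->.
Qed.

Lemma join_eq_perm (f : {ffun 'I_n -> T}) (g : {ffun 'I_m -> T}) (s : {perm T}) :
  (join f g == [ffun x => s x]) =
  (g == [ffun r => s (idxR r)]) && (f == [ffun l => s (idxL l)]).
Proof.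
apply/eqP/andP => [/ffunP fg_s|[/eqP-> /eqP->]].
  split; apply/eqP/ffunP => i; rewrite ffunE.
    by move: (fg_s (idxR i)); rewrite joinR ffunE.
  by move: (fg_s (idxL i)); rewrite joinL ffunE.
by apply/ffunP; apply: eq_on_blocks => i; rewrite ?joinL ?joinR !ffunE.
Qed.

Lemma sum_join (F : {ffun T -> T} -> algC) :
  \sum_(f : {ffun 'I_n -> T}) \sum_(g : {ffun 'I_m -> T}) F (join f g) = \sum_h F h.
Proof.
rewrite pair_bigA /= (reindex (fun h : {ffun T -> T} =>
  ([ffun l => h (idxL l)], [ffun r => h (idxR r)]))) /=.
  by apply: eq_bigr => h _; rewrite join_split.
exists (fun fg : {ffun _ -> T} * {ffun _ -> T} => join fg.1 fg.2) => [h _|[f g] _].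
  exact: join_split.
by congr (_, _); apply/ffunP => i; rewrite ffunE /= ?joinL ?joinR.
Qed.

Definition lperm (t : 'S_n) : {perm T} :=
  perm (join_inj (inj_comp idxL_inj (@perm_inj _ t)) idxR_inj
                 (fun l r => idxLR_neq (t l) r)).

Lemma lpermL t l : lperm t (idxL l) = idxL (t l).
Proof. by rewrite permE joinL. Qed.

Lemma lpermR t r : lperm t (idxR r) = idxR r.
Proof. by rewrite permE joinR. Qed.

Lemma lperm_inj : injective lperm.
Proof. by move=> t t' tt'; apply/permP => l; apply: idxL_inj; rewrite -!lpermL tt'. Qed.

Lemma lpermM : {morph lperm : t t' / (t * t')%g}.
Proof.
move=> t t'; apply/permP; apply: eq_on_blocks => i;
  by rewrite !permM ?lpermL ?lpermR ?permM.
Qed.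

Lemma lperm_tperm a b : lperm (tperm a b) = tperm (idxL a) (idxL b).
Proof.
apply/permP; apply: eq_on_blocks => [l|r]; rewrite ?lpermL ?lpermR.
  by rewrite !permE /= !(inj_eq idxL_inj); case: eqP => //; case: eqP.
by rewrite permE /= ![idxR r == _]eq_sym !(negbTE (idxLR_neq _ _)).
Qed.

Lemma odd_lperm t : odd_perm (lperm t) = odd_perm t.
Proof.
have [ts -> dts] := prod_tpermP t.
have lperm_prod (us : seq ('I_n * 'I_n)) : lperm (\prod_(u <- us) tperm u.1 u.2)%g =
    (\prod_(u <- map (fun u => (idxL u.1, idxL u.2)) us) tperm u.1 u.2)%g.
  elim: us => [|u us IHus]; last by rewrite big_cons /= big_cons lpermM IHus lperm_tperm.
  by rewrite !big_nil; apply/permP; apply: eq_on_blocks => i;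
     rewrite ?lpermL ?lpermR !perm1.
rewrite lperm_prod !odd_perm_prod ?size_map // all_map.
by apply: sub_all dts => u; rewrite /dpair /= (inj_eq idxL_inj).
Qed.

Lemma join_comp_lperm (f : {ffun 'I_n -> T}) g (t : 'S_n) :
  join [ffun l => f (t l)] g = [ffun x => join f g (lperm t x)].
Proof.
by apply/ffunP; apply: eq_on_blocks => i; rewrite [in RHS]ffunE ?lpermL ?lpermR ?joinL ?joinR ?ffunE.
Qed.

Definition stab_right (p : {perm T}) := [forall r, p (idxR r) == idxR r].

Lemma sum_stab_right (F : {perm T} -> algC) :
  \sum_(p | stab_right p) F p = \sum_(t : 'S_n) F (lperm t).
Proof.
rewrite -(big_imset F (in2W lperm_inj)) /=; apply: eq_bigl => p.
apply/idP/imsetP => [/forallP pR|[t _ ->]]; last first.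
  by apply/forallP => r; rewrite lpermR.
pose tf l := if unidx (p (idxL l)) is inl l' then l' else l.
have tfE l : idxL (tf l) = p (idxL l).
  rewrite /tf; move: (unidxK (p (idxL l))); case: (unidx _) => [l'|r] pl //.
  by move: (eqP (pR r)); rewrite {2}/idxR pl => /perm_inj/eqP;
     rewrite eq_sym (negbTE (idxLR_neq _ _)).
have tf_inj : injective tf by move=> a b /(congr1 idxL); rewrite !tfE => /perm_inj/idxL_inj.
exists (perm tf_inj) => //; apply/permP; apply: eq_on_blocks => i.
  by rewrite lpermL permE tfE.
by rewrite lpermR; apply/eqP.
Qed.

Lemma levi_join_idxR (f : {ffun 'I_n -> T}) :
  levi (join f idxR) = \sum_(t : 'S_n) (-1) ^+ t * (f == [ffun l => idxL (t l)])%:R.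
Proof.
have -> : join f idxR = join f [ffun r => idxR r].
  by apply/ffunP => x; rewrite !ffunE; case: (unidx x) => // r; rewrite ffunE.
have idxR_stab (s : {perm T}) : ([ffun r => idxR r] == [ffun r => s (idxR r)]) = stab_right s.
  apply/eqP/forallP => [/ffunP idR r|idR]; last by apply/ffunP => r; rewrite !ffunE (eqP (idR r)).
  by move: (idR r); rewrite !ffunE => <-.
transitivity (\sum_(s | stab_right s) (-1) ^+ s * (f == [ffun l => s (idxL l)])%:R : algC).
  rewrite [RHS]big_mkcond; apply: eq_bigr => s _.
  by rewrite join_eq_perm idxR_stab; case: (stab_right s); rewrite ?mulr0.
rewrite sum_stab_right; apply: eq_bigr => t _; rewrite odd_lperm.
by congr (_ * (_ == _)%:R); apply/ffunP => l; rewrite !ffunE lpermL.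
Qed.

Lemma perm_extension (f : 'I_n -> T) : injective f ->
  exists s : {perm T}, forall l, s (idxL l) = f l.
Proof.
move=> f_inj; pose C := ~: [set f l | l in 'I_n].
have cardC : m = #|C|.
  by apply/(@addnI n); rewrite -card_blocks -(cardsC [set f l | l in 'I_n]) card_imset ?card_ord.
pose g r := enum_val (cast_ord cardC r).
have g_inj : injective g by move=> a b /enum_val_inj/cast_ord_inj.
have fg l r : f l != g r.
  by apply/eqP => flg; have := enum_valP (cast_ord cardC r); rewrite -/(g r) -flg !inE imset_f.
by exists (perm (join_inj f_inj g_inj fg)) => l; rewrite permE joinL.
Qed.

(* The extensions of [f] form a coset of the pointwise stabiliser of the left
   block, i.e. of the permutations supported on the right block. *)
Lemma card_perm_extensions (f : {ffun 'I_n -> T}) : injective f ->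
  \sum_(s : {perm T}) (f == [ffun l => s (idxL l)])%:R = (m`!)%:R :> algC.
Proof.
move=> f_inj; have [s0 s0L] := perm_extension f_inj.
pose S := [set idxR r | r in 'I_m].
have fixL_S p : (p \in perm_on S) = [forall l, p (idxL l) == idxL l].
  apply/idP/forallP => [pS l|fixL].
    by apply/eqP/(out_perm pS)/imsetP => -[r _ /eqP]; rewrite (negbTE (idxLR_neq _ _)).
  apply/subsetP => x; rewrite inE -(unidxK x); case: (unidx x) => [l|r _]; last exact: imset_f.
  by rewrite -/(idxL l) fixL.
rewrite (reindex_inj (mulIg s0)) /= -(card_ord m) -(card_imset _ idxR_inj) -card_perm.
rewrite -sum1_card natr_sum [RHS]big_mkcond /=; apply: eq_bigr => p _.
rewrite fixL_S; case: forallP => [fixL|fixL].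
  by rewrite (_ : f == _) //; apply/eqP/ffunP => l; rewrite !ffunE permM (eqP (fixL l)) s0L.
case: eqP => // /ffunP fp; case: fixL => l.
by move: (fp l); rewrite !ffunE permM -s0L => /perm_inj <-.
Qed.

(* For each [s] only [g = s \o idxR] contributes, and pulling [s] out of the
   second symbol leaves [levi (join _ idxR)]. *)
Lemma sum_levi_join_mul (f f' : {ffun 'I_n -> T}) :
  \sum_(g : {ffun 'I_m -> T}) levi (join f g) * levi (join f' g) =
  (\sum_(s : {perm T}) (f == [ffun l => s (idxL l)])%:R) *
  \sum_(t : 'S_n) (-1) ^+ t * (f' == [ffun l => f (t l)])%:R.
Proof.
under eq_bigr do rewrite [levi (join f _)]/levi mulr_suml.
rewrite exchange_big mulr_suml; apply: eq_bigr => s _ /=.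
rewrite (eq_bigr (fun g => (g == [ffun r => s (idxR r)])%:R *
   ((-1) ^+ s * (f == [ffun l => s (idxL l)])%:R * levi (join f' g)))); last first.
  by move=> g _; rewrite join_eq_perm -mulnb natrM mulrCA [RHS]mulrA.
rewrite sumr_pred1; case: eqP => [fs|_]; last by rewrite !mulr0 !mul0r.
have -> : join f' [ffun r => s (idxR r)] =
          [ffun x => s (join [ffun l => (s^-1)%g (f' l)] idxR x)].
  by apply/ffunP; apply: eq_on_blocks => i; rewrite [in RHS]ffunE ?joinL ?joinR !ffunE ?permKV.
rewrite levi_perm_comp levi_join_idxR mulr1 mul1r mulrA -signr_addb addbb mul1r.
apply: eq_bigr => t _; congr (_ * (_ : bool)%:R); rewrite fs.
apply/eqP/eqP => /ffunP E; apply/ffunP => l; move: (E l); rewrite !ffunE.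
  by move=> <-; rewrite permKV.
by move=> ->; rewrite permK.
Qed.

End Blocks.

Lemma bvecK d k (f : tens d k) : bvec (enum_rank f) = f.
Proof. exact: enum_rankK. Qed.

Lemma sum_enum_rank d k (F : 'I_(dimT d k) -> algC) :
  \sum_i F i = \sum_(f : tens d k) F (enum_rank f).
Proof. by apply: reindex; exists enum_val => i _; rewrite ?enum_rankK ?enum_valK. Qed.

Section TensorPower.
Variables d k : nat.

Lemma tensU_mul (U W : 'M[algC]_d) : tensU k U *m tensU k W = tensU k (U *m W).
Proof.
apply/matrixP => i j; rewrite !mxE sum_enum_rank; under eq_bigr do rewrite !mxE !bvecK.
under [RHS]eq_bigr do rewrite mxE.
by rewrite bigA_distr_bigA /=; apply: eq_bigr => f _; rewrite -big_split.
Qed.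

Lemma tensU1 : tensU k (1%:M : 'M[algC]_d) = 1%:M.
Proof.
apply/matrixP => i j; rewrite !mxE; under eq_bigr do rewrite mxE.
rewrite prodr_natb -(inj_eq enum_val_inj) -/(bvec i) -/(bvec j).
by congr (_ : bool)%:R; apply/forallP/eqP => [bij|-> //]; apply/ffunP => l; apply/eqP.
Qed.

Lemma permT_tensU (V : 'M[algC]_d) (t : 'S_k) :
  permT d t *m tensU k V = tensU k V *m permT d t.
Proof.
apply/matrixP => i j; rewrite !mxE !sum_enum_rank.
under eq_bigr do rewrite !mxE !bvecK eq_comp_perm_sym.
under [RHS]eq_bigr do rewrite !mxE !bvecK.
under [RHS]eq_bigr do rewrite mulrC.
rewrite !sumr_pred1 (reindex_inj (@perm_inj _ t)) /=.
by apply: eq_bigr => l _; rewrite !ffunE permK.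
Qed.

Lemma antisym_supported_conj (V : 'M[algC]_d) (X : 'M[algC]_(dimT d k)) :
  antisym_supported X -> antisym_supported (tensU k V *m X *m mxadj (tensU k V)).
Proof.
move=> X_anti t; rewrite !mulmxA permT_tensU -(mulmxA _ (permT d t)) X_anti.
by rewrite -scalemxAr -scalemxAl.
Qed.

Definition antisymmetrizer : 'M[algC]_(dimT d k) :=
  (k`!%:R)^-1 *: \sum_(t : 'S_k) sgnC t *: permT d t.

Lemma antisymmetrizerE i j : antisymmetrizer i j =
  (k`!%:R)^-1 * \sum_(t : 'S_k) sgnC t * (bvec i == [ffun l => bvec j (t l)])%:R.
Proof. by rewrite !mxE summxE; congr (_ * _); apply: eq_bigr => t _; rewrite !mxE. Qed.

Lemma antisymmetrizer_mul (X : 'M[algC]_(dimT d k)) :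
  antisym_supported X -> antisymmetrizer *m X = X.
Proof.
move=> Xanti; rewrite -scalemxAl mulmx_suml.
under eq_bigr do rewrite -scalemxAl Xanti scalerA sgnC_sqr scale1r.
by rewrite sumr_const card_Sn -scaler_nat scalerA mulVf ?scale1r ?fact_neq0.
Qed.

Lemma mul_antisymmetrizer p (M : 'M[algC]_(p, dimT d k)) :
  (forall t : 'S_k, M *m permT d t = sgnC t *: M) -> M *m antisymmetrizer = M.
Proof.
move=> Manti; rewrite -scalemxAr mulmx_sumr.
under eq_bigr do rewrite -scalemxAr Manti scalerA sgnC_sqr scale1r.
by rewrite sumr_const card_Sn -scaler_nat scalerA mulVf ?scale1r ?fact_neq0.
Qed.

End TensorPower.

Section Aop.
Variables (d n : nat) (hnd : (n <= d)%N).
Local Notation m := (d - n)%N.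
Local Notation A := (Aop hnd).

(* Positions 1..n and n+1..d of the word sigma_1 ... sigma_d. *)
Definition idx_split (x : 'I_n + 'I_m) : 'I_d := cast_ord (subnKC hnd) (unsplit x).
Definition unidx_split (x : 'I_d) : 'I_n + 'I_m := split (cast_ord (esym (subnKC hnd)) x).

Lemma idx_splitK : cancel idx_split unidx_split.
Proof. by move=> x; rewrite /unidx_split /idx_split cast_ordK unsplitK. Qed.

Lemma unidx_splitK : cancel unidx_split idx_split.
Proof. by move=> x; rewrite /unidx_split /idx_split splitK cast_ordKV. Qed.

Local Notation join := (join unidx_split).

Definition cA : algC := (sqrtC ((m`!)%:R * (n`!)%:R))^-1.

Lemma Aop_levi i j : A i j = cA * levi (join (bvec j) (bvec i)).
Proof.
rewrite mxE; congr (_ * _); apply: eq_bigr => s _.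
by rewrite (join_eq_perm idx_splitK unidx_splitK).
Qed.

Lemma cA_conj : cA^* = cA.
Proof. by apply: geC0_conj; rewrite invr_ge0 sqrtC_ge0 mulr_ge0 ?ler0n. Qed.

Lemma cA_sqr : cA * cA = ((m`!)%:R * (n`!)%:R)^-1.
Proof. by rewrite -invfM -expr2 sqrtCK. Qed.

Lemma Aop_conj i j : (A i j)^* = A i j.
Proof. by rewrite Aop_levi -{2}cA_conj -{2}levi_conj; apply: rmorphM. Qed.

Lemma mxadj_Aop_mul : mxadj A *m A = antisymmetrizer d n.
Proof.
apply/matrixP => i j; rewrite antisymmetrizerE mxE sum_enum_rank.
under eq_bigr do rewrite mxadjE Aop_conj !Aop_levi bvecK mulrACA.
rewrite -mulr_sumr (sum_levi_join_mul idx_splitK unidx_splitK) sum_comp_perm_sym cA_sqr.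
have [/injectiveP bi_inj|bi_noninj] := boolP (injectiveb (bvec i)).
  rewrite (card_perm_extensions idx_splitK unidx_splitK bi_inj) invfM mulrACA.
  by rewrite mulVf ?mul1r // fact_neq0.
by rewrite sum_comp_perm_noninj // !mulr0.
Qed.

Lemma Aop_permT (t : 'S_n) : A *m permT d t = sgnC t *: A.
Proof.
apply/matrixP => i j; rewrite [RHS]mxE Aop_levi mxE sum_enum_rank.
under eq_bigr do rewrite Aop_levi mxE bvecK mulrC.
rewrite sumr_pred1 (join_comp_lperm idx_splitK unidx_splitK) levi_comp_perm.
by rewrite odd_lperm mulrCA.
Qed.

Lemma Aop_partial_isometry : A *m mxadj A *m A = A.
Proof. by rewrite -mulmxA mxadj_Aop_mul mul_antisymmetrizer // => t; apply: Aop_permT. Qed.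

Lemma tensU_Aop (U : 'M[algC]_d) : tensU m U *m A *m tensU n U^T = \det U *: A.
Proof.
apply/matrixP => i j; rewrite [RHS]mxE Aop_levi mxE sum_enum_rank.
under eq_bigr do rewrite mxE mulr_suml sum_enum_rank.
pose M := rowsub (join (bvec j) (bvec i)) U.
have M_prod f g : \prod_x M x (join f g x) =
                  \prod_l U (bvec j l) (f l) * \prod_r U (bvec i r) (g r).
  rewrite (prod_blocks idx_splitK unidx_splitK).
  by congr (_ * _); apply: eq_bigr => x _; rewrite mxE ?(joinL idx_splitK) ?(joinR idx_splitK).
transitivity (cA * \sum_(f : tens d n) \sum_(g : tens d m)
                     levi (join f g) * \prod_x M x (join f g x)).
  rewrite mulr_sumr; apply: eq_bigr => f _; rewrite mulr_sumr; apply: eq_bigr => g _.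
  rewrite Aop_levi !mxE !bvecK M_prod; under [\prod_(l < n) _]eq_bigr do rewrite mxE.
  by rewrite mulrAC mulrC -mulrA (mulrC (\prod_(l < m) _)).
rewrite (sum_join idx_splitK unidx_splitK (fun h => levi h * \prod_x M x (h x))).
by rewrite sum_levi_prod /M det_rowsub_levi mulrA mulrC.
Qed.

Lemma tensU_Aop_unitary (U : 'M[algC]_d) : unitary U ->
  tensU m U *m A = \det U *: (A *m tensU n (map_mx Num.conj U)).
Proof.
move=> U_unitary; have UtUc : U^T *m map_mx Num.conj U = 1%:M.
  by rewrite -[1%:M]trmx1 -(mulmx1C U_unitary) trmx_mul /mxadj trmxK.
by rewrite -[LHS]mulmx1 -(tensU1 d n) -UtUc -tensU_mul mulmxA tensU_Aop -scalemxAl.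
Qed.

Lemma mxadj_Aop_mul_fix X : mxadj X = X -> antisym_supported X ->
  mxadj A *m A *m X = X /\ X *m (mxadj A *m A) = X.
Proof.
move=> Xh X_anti; have AAX : mxadj A *m A *m X = X.
  by rewrite mxadj_Aop_mul antisymmetrizer_mul.
by split=> //; apply: herm_mulmx_fixr AAX; rewrite // mxadjM mxadjK.
Qed.

Lemma tensU_Aop_conj (U : 'M[algC]_d) (X : 'M[algC]_(dimT d n)) : unitary U ->
  let V := tensU n (map_mx Num.conj U) in
  tensU m U *m (A *m X *m mxadj A) *m mxadj (tensU m U) = A *m (V *m X *m mxadj V) *m mxadj A.
Proof.
move=> U_unitary V.
have -> : tensU m U *m (A *m X *m mxadj A) *m mxadj (tensU m U) =
          tensU m U *m A *m X *m mxadj (tensU m U *m A) by rewrite mxadjM !mulmxA.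
rewrite tensU_Aop_unitary // mxadjZ mxadjM -!scalemxAl -scalemxAr scalerA.
by rewrite det_unitary // scale1r !mulmxA.
Qed.

End Aop.

Unset Implicit Arguments.
Theorem theorem1 (d n : nat) (hnd : (n <= d)%N)
  (E : 'M[algC]_(dimT d n) -> 'M[algC]_(dimT d (d - n)))
  (D : 'M[algC]_(dimT d (d - n)) -> 'M[algC]_(dimT d n)) :
  cptp_with_kraus E (Aop hnd) ->
  cptp_with_kraus D (mxadj (Aop hnd)) ->
  forall (U : 'M[algC]_d), unitary U ->
  forall rho : 'M[algC]_(dimT d n), density rho -> antisym_supported rho ->
  D (tensU (d - n) U *m E rho *m mxadj (tensU (d - n) U)) =
  tensU n (map_mx Num.conj U) *m rho *m mxadj (tensU n (map_mx Num.conj U)).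
Proof.
move=> E_kraus D_kraus U U_unitary rho [rho_herm _] rho_anti.
have AAA := Aop_partial_isometry hnd.
have [AArho rhoAA] := mxadj_Aop_mul_fix hnd rho_herm rho_anti.
set V := tensU n (map_mx Num.conj U); set Y := V *m rho *m mxadj V.
have Yh : mxadj Y = Y by rewrite !mxadjM mxadjK rho_herm mulmxA.
have [AAY YAA] := mxadj_Aop_mul_fix hnd Yh (antisym_supported_conj _ rho_anti).
rewrite (kraus_partial_isometry E_kraus AAA AArho rhoAA) tensU_Aop_conj //.
by rewrite (kraus_adj_partial_isometry _ D_kraus AAA) AAY -mulmxA YAA.
Qed.
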